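(* Let $m,n\ge0$, $0\le k\le\min(m,n)$, and let $i,j$ be integers with $0\le i\le m$, $0\le j\le n$, $k\le i+j\le m+n-k$. Then $$\binom{m+n-k}{i,\ j,\ m+n-k-i-j}\,c_{m,n,k}(m-i,\,n-j)=(-1)^k\binom{m+n-k}{m-i,\ n-j,\ i+j-k}\,c_{m,n,k}(i,j).$$
   Context: Multinomial coefficients: $\binom{a+b+c}{a,\ b,\ c}=\frac{(a+b+c)!}{a!\,b!\,c!}$ for nonnegative $a,b,c$. Let $e,f,h$ be the standard basis of $\mathfrak{sl}(2,\mathbb{C})$. $V(n)$ is the irreducible representation of highest weight $n$ with fixed highest weight vector $\phi_n$; $\{f^i\phi_n\}_{0\le i\le n}$ is a basis, $f^{n+1}\phi_n=0$. $\mathfrak{sl}(2)$ acts on $V(m)\otimes V(n)$ by $X(v\otimes w)=Xv\otimes w+v\otimes Xw$. For any $m,n\ge 0$ and $0\le k\le\min(m,n)$, $\phi_{m,n,k}=\sum_{l=0}^{k}(-1)^l\binom{m-l}{k-l}\binom{n-k+l}{l} f^l\phi_m\otimes f^{k-l}\phi_n\in V(m)\otimes V(n)$ (a highest weight vector of weight $m+n-2k$). The coordinates $c_{m,n,k}(i,j)$ are defined by $f^{p-k}\phi_{m,n,k}=\sum_{i+j=p,\,0\le i\le m,\,0\le j\le n} c_{m,n,k}(i,j)\, f^i\phi_m\otimes f^j\phi_n$ for $k\le p\le m+n-k$. *)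

From HB Require Import structures.
From mathcomp Require Import all_boot all_order all_algebra.
Set Implicit Arguments. Unset Strict Implicit. Unset Printing Implicit Defensive.
Import Order.TTheory GRing.Theory Num.Theory.

Definition multinom (a b c : nat) : nat :=
  ((a + b + c)`! %/ (a`! * b`! * c`!))%N.

(* An element of V(m) (x) V(n) is represented by its coordinates v i j on the
   basis f^i phi_m (x) f^j phi_n, 0 <= i <= m, 0 <= j <= n; coordinates outside
   this range are 0 (convention).  Coefficients are integers (everything here
   is defined over Z, a subring of C). *)
Definition tensor := nat -> nat -> int.

(* Action of f on V(m) (x) V(n): f(f^i phi_m (x) f^j phi_n)
   = f^(i+1) phi_m (x) f^j phi_n + f^i phi_m (x) f^(j+1) phi_n,
   with f^(m+1) phi_m = 0 and f^(n+1) phi_n = 0. *)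
Definition fact_tensor (m n : nat) (v : tensor) : tensor :=
  fun i j =>
    if (i <= m)%N && (j <= n)%N then
      ((if (0 < i)%N then v i.-1 j else 0) + (if (0 < j)%N then v i j.-1 else 0))%R
    else 0%R.

(* phi_{m,n,k} = sum_{l=0}^k (-1)^l C(m-l,k-l) C(n-k+l,l) f^l phi_m (x) f^(k-l) phi_n *)
Definition phi_mnk (m n k : nat) : tensor :=
  fun i j =>
    if [&& (i + j == k)%N, (i <= k)%N, (i <= m)%N & (j <= n)%N] then
      ((-1) ^+ i * ('C(m - i, k - i) * 'C(n - k + i, i))%:R)%R
    else 0%R.

(* c_{m,n,k}(i,j): coefficient of f^i phi_m (x) f^j phi_n in f^(p-k) phi_{m,n,k},
   with p = i + j. *)
Definition c_mnk (m n k i j : nat) : int :=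
  iter (i + j - k) (fact_tensor m n) (phi_mnk m n k) i j.

From HB Require Import structures.
From mathcomp Require Import all_boot all_order all_algebra.
From mathcomp Require Import zify ring.
Import Order.TTheory GRing.Theory Num.Theory.
Set Implicit Arguments.
Unset Strict Implicit.
Local Open Scope ring_scope.

(* Up to the factor (i+j-k)! (m-i)! (n-j)! / ((m-k)! (n-k)! k!), the
   coordinate c_{m,n,k}(i,j) is the alternating Vandermonde sum
     T(i,j) = sum_r (-1)^r C(k,r) C(m-k, i-r) C(n-k, j+r-k).
   Both sides agree on the line i + j = k, and the recursion
   c(i,j) = c(i-1,j) + c(i,j-1) given by the action of f becomes
   (i+j-k) T(i,j) = (m-i+1) T(i-1,j) + (n-j+1) T(i,j-1), which holds because
   its summands telescope.  Reversing r <-> k - r gives T(m-i, n-j) = (-1)^k T(i,j),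
   and the multinomial coefficients turn both prefactors into (m+n-k)!. *)

Definition binz (M : nat) (z : int) : int :=
  if z is Posz u then 'C(M, u)%:R else 0.

Lemma binz_neg M (z : int) : z < 0 -> binz M z = 0.
Proof. by case: z. Qed.

Lemma binz_small M (z : int) : M%:Z < z -> binz M z = 0.
Proof. by case: z => //= u; rewrite ltz_nat => /bin_small->. Qed.

Lemma mul_binz_left M (z : int) :
  z * binz M z = (M%:Z - z + 1) * binz M (z - 1).
Proof.
case: z => [[|u]|u]; first by rewrite mul0r binz_neg ?mulr0.
- have -> : u.+1%:Z - 1 = u by lia.
  have := mul_bin_left M u; rewrite /=.
  have [le|lt] := leqP u M; first by rewrite !natz; nia.
  by rewrite (bin_small lt) bin_small ?mulr0 //; lia.
- by rewrite !mulr0.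
Qed.

Lemma binz_sub M (z : int) : binz M (M%:Z - z) = binz M z.
Proof.
have [zlt|zge] := ltP z 0; first by rewrite (binz_neg M zlt) binz_small //; lia.
have [Mlt|Mge] := ltP M%:Z z.
  by rewrite (binz_small Mlt) binz_neg //; lia.
case: z zge Mge => // u _; rewrite lez_nat => uM.
have -> : M%:Z - u%:Z = (M - u)%N by lia.
by rewrite /= bin_sub.
Qed.

Section AltVandermonde.
Variables M N k : nat.

Definition alt_vandermonde_term (x y : int) (r : nat) : int :=
  (-1) ^+ r * 'C(k, r)%:R * binz M (x - r%:Z) * binz N (y + r%:Z - k%:Z).

Definition alt_vandermonde (x y : int) : int :=
  \sum_(0 <= r < k.+1) alt_vandermonde_term x y r.

Lemma alt_vandermonde_negl x y : x < 0 -> alt_vandermonde x y = 0.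
Proof.
move=> x_lt0; rewrite /alt_vandermonde /alt_vandermonde_term big1_seq // => r _.
by rewrite (@binz_neg M (x - r%:Z)) ?mulr0 ?mul0r //; lia.
Qed.

Lemma alt_vandermonde_negr x y : y < 0 -> alt_vandermonde x y = 0.
Proof.
move=> y_lt0; rewrite /alt_vandermonde /alt_vandermonde_term big_nat big1 //.
move=> r /andP[_ r_le_k].
by rewrite (@binz_neg N (y + r%:Z - k%:Z)) ?mulr0 //; lia.
Qed.

Lemma alt_vandermonde_diag (i : nat) : (i <= k)%N ->
  alt_vandermonde i (k - i)%N = (-1) ^+ i * 'C(k, i)%:R.
Proof.
move=> i_le_k; rewrite /alt_vandermonde /alt_vandermonde_term.
rewrite (@big_cat_nat _ _ _ i) ?leqW //= (@big_ltn _ _ _ i) ?ltnS //.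
rewrite !big1_seq ?add0r ?addr0 => [|r|r]; rewrite ?mem_index_iota.
- have -> : (k - i)%N%:Z + i%:Z - k%:Z = 0 by lia.
  by rewrite subrr /= !bin0 !mulr1.
- move=> /andP[_ /andP[ir _]].
  by rewrite (@binz_neg M (i%:Z - r%:Z)) ?mulr0 ?mul0r //; lia.
- move=> /andP[_ /andP[_ ri]].
  by rewrite (@binz_neg N ((k - i)%N%:Z + r%:Z - k%:Z)) ?mulr0 //; lia.
Qed.

Lemma alt_vandermonde_sub x y :
  alt_vandermonde (M%:Z + k%:Z - x) (N%:Z + k%:Z - y)
  = (-1) ^+ k * alt_vandermonde x y.
Proof.
rewrite /alt_vandermonde /alt_vandermonde_term mulr_sumr big_nat_rev /=.
apply: eq_big_nat => r /andP[_ r_le_k]; rewrite add0n subSS.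
have -> : M%:Z + k%:Z - x - (k - r)%N%:Z = M%:Z - (x - r%:Z) by lia.
have -> : N%:Z + k%:Z - y + (k - r)%N%:Z - k%:Z = N%:Z - (y + r%:Z - k%:Z).
  by lia.
have -> : (-1) ^+ k = (-1) ^+ (k - r) * (-1) ^+ r :> int.
  by rewrite -exprD subnK.
by rewrite !binz_sub bin_sub // -mulrA -!mulrA signrMK.
Qed.

Let telescoper (x y : int) (r : nat) : int :=
  (-1) ^+ r * r%:R * 'C(k, r)%:R
  * binz M (x - r%:Z) * binz N (y + r%:Z - 1 - k%:Z).

Lemma alt_vandermonde_term_rec x y r : (r <= k)%N ->
  (M%:Z + k%:Z - x + 1) * alt_vandermonde_term (x - 1) y r
  + (N%:Z + k%:Z - y + 1) * alt_vandermonde_term x (y - 1) r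
  - (x + y - k%:Z) * alt_vandermonde_term x y r
  = telescoper x y r - telescoper x y r.+1.
Proof.
move=> r_le_k; rewrite /alt_vandermonde_term /telescoper.
set u := x - r%:Z; set v := y + r%:Z - k%:Z.
have -> : x - 1 - r%:Z = u - 1 by rewrite /u; ring.
have -> : y - 1 + r%:Z - k%:Z = v - 1 by rewrite /v; ring.
have -> : x - r.+1%:Z = u - 1 by rewrite /u; lia.
have -> : y + r.+1%:Z - 1 - k%:Z = v by rewrite /v; lia.
have -> : y + r%:Z - 1 - k%:Z = v - 1 by rewrite /v; ring.
have recA := mul_binz_left M u; have recB := mul_binz_left N v.
have recC : r.+1%:R * 'C(k, r.+1)%:R = (k%:Z - r%:Z) * 'C(k, r)%:R :> int.
  by rewrite -natrM mul_bin_left natrM; congr (_ * _); lia.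
have -> : x = u + r%:Z by rewrite /u; ring.
have -> : y = v - r%:Z + k%:Z by rewrite /v; ring.
rewrite exprS mulN1r.
set A := binz M u; set A' := binz M (u - 1).
set B := binz N v; set B' := binz N (v - 1).
set c := 'C(k, r)%:R : int; set c' := 'C(k, r.+1)%:R : int.
set s := (-1) ^+ r : int.
apply/eqP; rewrite -subr_eq0; apply/eqP.
(* Each bracket vanishes by one of the recursions recA, recB, recC. *)
transitivity (s * c * B * ((M%:Z - u + 1) * A' - u * A)
  + s * c * A * ((N%:Z - v + 1) * B' - v * B)
  + s * A' * B * ((k%:Z - r%:Z) * c - r.+1%:R * c')).
  by rewrite -natr1; ring.
by rewrite recA recB recC !subrr !mulr0 !addr0.
Qed.

Lemma alt_vandermonde_rec x y :
  (M%:Z + k%:Z - x + 1) * alt_vandermonde (x - 1) y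
  + (N%:Z + k%:Z - y + 1) * alt_vandermonde x (y - 1)
  = (x + y - k%:Z) * alt_vandermonde x y.
Proof.
apply/eqP; rewrite -subr_eq0; apply/eqP.
rewrite /alt_vandermonde !mulr_sumr -big_split -sumrB /=.
rewrite (telescope_sumr_eq (fun r => - telescoper x y r)) //.
  by rewrite /telescoper bin_small // !(mulr0, mul0r) subrr.
move=> r /andP[_ r_lt].
by rewrite alt_vandermonde_term_rec // opprK addrC.
Qed.

End AltVandermonde.

Lemma c_mnk_rec m n k i j : (i <= m)%N -> (j <= n)%N -> (k < i + j)%N ->
  c_mnk m n k i j = (if (0 < i)%N then c_mnk m n k i.-1 j else 0)
                    + (if (0 < j)%N then c_mnk m n k i j.-1 else 0).
Proof.
move=> im jn kij; rewrite /c_mnk.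
have -> : (i + j - k = (i + j - k.+1).+1)%N by lia.
rewrite iterS /fact_tensor im jn /=; congr (_ + _).
- by case: i {im kij} => //= i; rewrite addSn subSS.
- by case: j {jn kij} => //= j; rewrite addnS subSS.
Qed.

Lemma phi_mnk_coef_fact m n k i : (i <= k)%N -> (k <= m)%N -> (k <= n)%N ->
  ('C(m - i, k - i) * 'C(n - k + i, i) * ((m - k)`! * (n - k)`! * k`!)
   = (m - i)`! * (n - k + i)`! * 'C(k, i))%N.
Proof.
move=> ik km kn; apply/eqP.
rewrite -(eqn_pmul2r (fact_gt0 i)) -(eqn_pmul2r (fact_gt0 (k - i))); apply/eqP.
have factMi : ('C(m - i, k - i) * ((k - i)`! * (m - k)`!) = (m - i)`!)%N.
  have -> : (m - k = (m - i) - (k - i))%N by lia.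
  by rewrite bin_fact // leq_sub2r.
have factNi : ('C(n - k + i, i) * (i`! * (n - k)`!) = (n - k + i)`!)%N.
  have {2}-> : (n - k = (n - k + i) - i)%N by lia.
  by rewrite bin_fact // leq_addl.
rewrite -factMi -factNi -(bin_fact ik); ring.
Qed.

Lemma c_mnk_closed m n k a : (k <= m)%N -> (k <= n)%N -> forall i j,
  (i <= m)%N -> (j <= n)%N -> (i + j = k + a)%N ->
  c_mnk m n k i j * ((m - k)`! * (n - k)`! * k`!)%N%:R
  = (a`! * (m - i)`! * (n - j)`!)%N%:R
    * alt_vandermonde (m - k) (n - k) k i j.
Proof.
move=> km kn; elim: a => [|a IH] i j im jn.
  rewrite addn0 => ijk; have ik : (i <= k)%N by lia.
  have -> : j = (k - i)%N by lia.
  rewrite /c_mnk subnKC // subnn /= /phi_mnk subnKC // eqxx ik im /=.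
  rewrite ifT; last by lia.
  rewrite alt_vandermonde_diag // -mulrA -natrM phi_mnk_coef_fact //.
  have -> : (n - (k - i) = n - k + i)%N by lia.
  by rewrite fact0 mul1n !natrM; ring.
move=> ijk; set K := ((m - k)`! * (n - k)`! * k`!)%N.
set V := alt_vandermonde (m - k) (n - k) k.
set P := ((a`! * (m - i)`! * (n - j)`!)%N%:R : int).
have c_prev_i : (if (0 < i)%N then c_mnk m n k i.-1 j else 0) * K%:R
    = P * (((m - k)%N%:Z + k%:Z - i%:Z + 1) * V (i%:Z - 1) j).
  rewrite /P; case: i im ijk {P} => [|i] im ijk /=.
    by rewrite mul0r /V alt_vandermonde_negl ?mulr0.
  rewrite IH; [|lia..]; have -> : i.+1%:Z - 1 = i by lia.
  have -> : (m - i = (m - i.+1).+1)%N by lia.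
  have -> : (m - k)%N%:Z + k%:Z - i.+1%:Z + 1 = (m - i.+1).+1%:R by lia.
  by rewrite factS !natrM; ring.
have c_prev_j : (if (0 < j)%N then c_mnk m n k i j.-1 else 0) * K%:R
    = P * (((n - k)%N%:Z + k%:Z - j%:Z + 1) * V i (j%:Z - 1)).
  rewrite /P; case: j jn ijk {P c_prev_i} => [|j] jn ijk /=.
    by rewrite mul0r /V alt_vandermonde_negr ?mulr0.
  rewrite IH; [|lia..]; have -> : j.+1%:Z - 1 = j by lia.
  have -> : (n - j = (n - j.+1).+1)%N by lia.
  have -> : (n - k)%N%:Z + k%:Z - j.+1%:Z + 1 = (n - j.+1).+1%:R by lia.
  by rewrite factS !natrM; ring.
rewrite c_mnk_rec; [|lia..].
rewrite mulrDl c_prev_i c_prev_j -mulrDr alt_vandermonde_rec.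
have -> : i%:Z + j%:Z - k%:Z = a.+1%:R by lia.
by rewrite factS !natrM; ring.
Qed.

Lemma multinom_fact a b c :
  (multinom a b c * (a`! * b`! * c`!) = (a + b + c)`!)%N.
Proof.
rewrite /multinom.
have binA := bin_fact (leq_addr (b + c) a); rewrite addKn in binA.
have binB := bin_fact (leq_addr c b); rewrite addKn in binB.
have -> : (a + b + c)`!
    = ('C(a + b + c, a) * 'C(b + c, b) * (a`! * b`! * c`!))%N.
  by rewrite -addnA -binA -binB; ring.
by rewrite mulnK // !muln_gt0 !fact_gt0.
Qed.

Lemma multinom_c_mnk m n k i j :
  (k <= m)%N -> (k <= n)%N -> (i <= m)%N -> (j <= n)%N -> (k <= i + j)%N ->
  (multinom (m - i) (n - j) (i + j - k))%:R * c_mnk m n k i j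
    * ((m - k)`! * (n - k)`! * k`!)%N%:R
  = (m + n - k)`!%:R * alt_vandermonde (m - k) (n - k) k i j.
Proof.
move=> km kn im jn kij.
rewrite -mulrA (@c_mnk_closed m n k (i + j - k)) ?subnKC // mulrA -natrM.
have -> : (m + n - k = (m - i) + (n - j) + (i + j - k))%N by lia.
by rewrite -multinom_fact; congr (_%:R * _); ring.
Qed.

Theorem proposition8p4 (m n k i j : nat) :
  (k <= minn m n)%N -> (i <= m)%N -> (j <= n)%N ->
  (k <= i + j)%N -> (i + j <= m + n - k)%N ->
  ((multinom i j (m + n - k - i - j))%:R * c_mnk m n k (m - i) (n - j)
   = (-1) ^+ k * (multinom (m - i) (n - j) (i + j - k))%:R * c_mnk m n k i j
   :> int)%R.
Proof.
rewrite leq_min => /andP[km kn] im jn kij ijk.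
have K_neq0 : ((m - k)`! * (n - k)`! * k`!)%N%:R != 0 :> int.
  by rewrite pnatr_eq0 -lt0n !muln_gt0 !fact_gt0.
apply: (mulIf K_neq0); rewrite -!mulrA.
have := multinom_c_mnk km kn im jn kij; rewrite -mulrA => ->.
have kij' : (k <= m - i + (n - j))%N by lia.
have := multinom_c_mnk km kn (leq_subr i m) (leq_subr j n) kij'.
have -> : (m - i + (n - j) - k = m + n - k - i - j)%N by lia.
rewrite !subKn // -mulrA => ->.
have -> : (m - i)%N%:Z = (m - k)%N%:Z + k%:Z - i%:Z by lia.
have -> : (n - j)%N%:Z = (n - k)%N%:Z + k%:Z - j%:Z by lia.
by rewrite alt_vandermonde_sub mulrCA.
Qed.
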